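(* CBS-DL is complete and optimal: on every MAPF-DL instance, and for every choice of tie-breaking, of collisions selected for branching, and of paths returned by the low-level search, CBS-DL terminates and returns a solution whose number of unsuccessful agents is the minimum over all solutions of the instance.
   Context: MAPF-DL. An instance consists of a deadline $T_{\mathrm{end}}\in\mathbb{N}$, a finite undirected graph $G=(V,E)$, and $M$ agents $a_1,\dots,a_M$; agent $a_i$ has a start vertex $s_i$ and a goal vertex $g_i$, and the graph distance from $s_i$ to $g_i$ is at most $T_{\mathrm{end}}$. A path for $a_i$ is a map $l_i:\{0,\dots,T_{\mathrm{end}}\}\to V$ with $l_i(0)=s_i$, $l_i(T_{\mathrm{end}})=g_i$, and for each $t\ge1$ either $(l_i(t-1),l_i(t))\in E$ or $l_i(t-1)=l_i(t)$. A plan assigns a path to each agent of some subset (the successful agents); the others are unsuccessful and get no path. Two distinct successful agents $a_i,a_j$ have a vertex collision $(a_i,a_j,v,t)$ if $l_i(t)=l_j(t)=v$, and an edge collision $(a_i,a_j,u,v,t)$ if $u=l_i(t)=l_j(t+1)$ and $v=l_j(t)=l_i(t+1)$. A solution is a plan with no collisions; its cost is the number of unsuccessful agents. Constraints: a vertex constraint $(a_i,v,t)$ forbids $l_i(t)=v$; an edge constraint $(a_i,u,v,t)$ forbids $l_i(t)=u$ together with $l_i(t+1)=v$. A path for $a_i$ obeys a constraint set $C$ if it violates none of the constraints in $C$ concerning $a_i$. Algorithm CBS-DL. Low-level search: given agent $a_i$ and constraint set $C$, it returns some path for $a_i$ obeying $C$ if one exists, and otherwise returns ''no path''. The high level performs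 best-first search over a constraint tree (CT); each CT node $N$ has a constraint set $N.C$, a plan $N.\mathrm{plan}$, and cost $N.\mathrm{cost}$ = number of agents without a path in $N.\mathrm{plan}$. The root has $C=\emptyset$ and the plan containing a low-level path for every agent (cost $0$). OPEN initially contains the root. Repeat: remove from OPEN a node $N$ of minimum cost (ties arbitrary). If $N.\mathrm{plan}$ has no collision, return it. Otherwise pick some collision in $N.\mathrm{plan}$. For a vertex collision $(a_i,a_j,v,t)$ create two children: one with constraints $N.C\cup\{(a_i,v,t)\}$ and one with $N.C\cup\{(a_j,v,t)\}$; for an edge collision $(a_i,a_j,u,v,t)$ the children get $N.C\cup\{(a_i,u,v,t)\}$ and $N.C\cup\{(a_j,v,u,t)\}$, respectively. Each child copies $N.\mathrm{plan}$, and then the path of the agent named in its new constraint is replaced by the low-level search result for that agent under the child's constraint set (the agent's path is deleted if ''no path'' is returned); the child's cost is recomputed and the child is inserted into OPEN. *)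

From Stdlib Require List.
From Stdlib Require Export Relation_Operators.
From HB Require Import structures.
From mathcomp Require Import all_boot.

(* A path is represented as a function nat -> V; only its values on
   {0,...,T} are ever inspected. *)

Definition dist_le {V : finType} (E : rel V) (x y : V) (T : nat) : Prop :=
  exists p : seq V, [&& path E x p, last x p == y & size p <= T].

Definition is_path {V : finType} {M : nat} (E : rel V) (T : nat)
    (s g : 'I_M -> V) (i : 'I_M) (l : nat -> V) : Prop :=
  l 0 = s i /\ l T = g i /\
  forall t, t < T -> E (l t) (l t.+1) \/ l t = l t.+1.

Inductive constr (V : finType) (M : nat) :=
| VCon (i : 'I_M) (v : V) (t : nat)          (* forbids l_i(t) = v *)
| ECon (i : 'I_M) (u v : V) (t : nat).       (* forbids l_i(t)=u /\ l_i(t+1)=v *)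
Arguments VCon {V M}.
Arguments ECon {V M}.

Definition agent_of {V : finType} {M : nat} (c : constr V M) : 'I_M :=
  match c with VCon i _ _ => i | ECon i _ _ _ => i end.

(* path l of agent i violates constraint c (times outside {0..T} are
   outside the domain of a path, so they cannot be violated) *)
Definition violates {V : finType} {M : nat} (T : nat) (i : 'I_M)
    (l : nat -> V) (c : constr V M) : Prop :=
  match c with
  | VCon j v t => j = i /\ t <= T /\ l t = v
  | ECon j u v t => j = i /\ t < T /\ l t = u /\ l t.+1 = v
  end.

Definition obeys {V : finType} {M : nat} (T : nat) (i : 'I_M)
    (C : seq (constr V M)) (l : nat -> V) : Prop :=
  forall c, List.In c C -> ~ violates T i l c.

(* plans: successful agents get Some path, unsuccessful ones None *)
Definition plan (V : finType) (M : nat) := 'I_M -> option (nat -> V).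

Definition has_path {V : finType} (o : option (nat -> V)) : bool :=
  if o is Some _ then true else false.

Definition cost {V : finType} {M : nat} (p : plan V M) : nat :=
  #|[pred i : 'I_M | ~~ has_path (p i)]|.

Definition vertex_collision {V : finType} {M : nat} (T : nat) (p : plan V M)
    (i j : 'I_M) (v : V) (t : nat) : Prop :=
  i <> j /\ t <= T /\
  exists li lj, p i = Some li /\ p j = Some lj /\ li t = v /\ lj t = v.

Definition edge_collision {V : finType} {M : nat} (T : nat) (p : plan V M)
    (i j : 'I_M) (u v : V) (t : nat) : Prop :=
  i <> j /\ t < T /\
  exists li lj, p i = Some li /\ p j = Some lj /\
    li t = u /\ lj t.+1 = u /\ lj t = v /\ li t.+1 = v.

Definition collision_free {V : finType} {M : nat} (T : nat) (p : plan V M) : Prop :=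
  (forall i j v t, ~ vertex_collision T p i j v t) /\
  (forall i j u v t, ~ edge_collision T p i j u v t).

Definition is_plan {V : finType} {M : nat} (E : rel V) (T : nat)
    (s g : 'I_M -> V) (p : plan V M) : Prop :=
  forall i l, p i = Some l -> is_path E T s g i l.

Definition solution {V : finType} {M : nat} (E : rel V) (T : nat)
    (s g : 'I_M -> V) (p : plan V M) : Prop :=
  is_plan E T s g p /\ collision_free T p.

Definition optimal_solution {V : finType} {M : nat} (E : rel V) (T : nat)
    (s g : 'I_M -> V) (p : plan V M) : Prop :=
  solution E T s g p /\ forall q, solution E T s g q -> cost p <= cost q.

Definition lowlevel_result {V : finType} {M : nat} (E : rel V) (T : nat)
    (s g : 'I_M -> V) (i : 'I_M) (C : seq (constr V M))
    (r : option (nat -> V)) : Prop :=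
  match r with
  | Some l => is_path E T s g i l /\ obeys T i C l
  | None => ~ exists l, is_path E T s g i l /\ obeys T i C l
  end.

Record node (V : finType) (M : nat) := Node { nC : seq (constr V M); nplan : plan V M }.
Arguments Node {V M}.
Arguments nC {V M}.
Arguments nplan {V M}.

Definition ncost {V : finType} {M : nat} (N : node V M) : nat := cost (nplan N).

Definition update {V : finType} {M : nat} (p : plan V M) (i : 'I_M)
    (r : option (nat -> V)) : plan V M :=
  fun k => if k == i then r else p k.

Definition is_child {V : finType} {M : nat} (E : rel V) (T : nat)
    (s g : 'I_M -> V) (N : node V M) (c : constr V M) (N' : node V M) : Prop :=
  exists r, lowlevel_result E T s g (agent_of c) (c :: nC N) r /\
            N' = Node (c :: nC N) (update (nplan N) (agent_of c) r).

Inductive state (V : finType) (M : nat) :=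
| Running (open : seq (node V M))
| Done (p : plan V M).
Arguments Running {V M}.
Arguments Done {V M}.

(* one iteration of the high-level loop; every nondeterministic choice
   (tie-breaking, collision to branch on, low-level paths) is allowed.
   OPEN is a list; the extracted node N is any node of minimum cost. *)
Inductive step {V : finType} {M : nat} (E : rel V) (T : nat)
    (s g : 'I_M -> V) : state V M -> state V M -> Prop :=
| step_return o1 N o2 :
    all (fun N' => ncost N <= ncost N') (o1 ++ o2) ->
    collision_free T (nplan N) ->
    step E T s g (Running (o1 ++ N :: o2)) (Done (nplan N))
| step_vertex o1 N o2 i j v t N1 N2 :
    all (fun N' => ncost N <= ncost N') (o1 ++ o2) ->
    vertex_collision T (nplan N) i j v t ->
    is_child E T s g N (VCon i v t) N1 ->
    is_child E T s g N (VCon j v t) N2 ->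
    step E T s g (Running (o1 ++ N :: o2)) (Running (o1 ++ o2 ++ [:: N1; N2]))
| step_edge o1 N o2 i j u v t N1 N2 :
    all (fun N' => ncost N <= ncost N') (o1 ++ o2) ->
    edge_collision T (nplan N) i j u v t ->
    is_child E T s g N (ECon i u v t) N1 ->
    is_child E T s g N (ECon j v u t) N2 ->
    step E T s g (Running (o1 ++ N :: o2)) (Running (o1 ++ o2 ++ [:: N1; N2])).

From mathcomp Require Import all_boot zify.
From Stdlib Require Import Classical.

Set Implicit Arguments.
Unset Strict Implicit.
Unset Printing Implicit Defensive.

(* Invariant of the high level: every node in OPEN holds, for each agent, an
   admissible low-level answer for its constraint set, and every solution q
   obeys the constraints of some node in OPEN.  Branching on a collision of
   N preserves the latter: q cannot violate both new constraints, as that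
   would be a collision of q, so it obeys those of one child.  Hence the
   minimum-cost node returned costs no more than any solution.
   Termination: the constraint set of a node is a duplicate-free list of
   constraints with times in {0..T}, drawn from a finite type of size K, so
   weighting a node with k constraints by 3^(K-k) makes the total weight of
   OPEN decrease at every iteration. *)

Lemma Acc_of_measure (A : Type) (R : A -> A -> Prop) (P : A -> Prop)
    (f : A -> nat) :
  (forall x y, P x -> R x y -> P y /\ f y < f x) ->
  forall x, P x -> Acc (fun y x => R x y) x.
Proof.
move=> Hdec x; move: {2}(f x) (leqnn (f x)) => n.
elim: n x => [|n IH] x Hx Px; constructor=> y Rxy;
  have [Py Hy] := Hdec x y Px Rxy; first lia.
by apply: IH Py; lia.
Qed.

Lemma clos_refl_trans_inv (A : Type) (R : A -> A -> Prop) (P : A -> Prop) x y :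
  (forall a b, P a -> R a b -> P b) -> clos_refl_trans A R x y -> P x -> P y.
Proof.
move=> HR; elim=> [a b Rab Pa|//|a b c _ IH1 _ IH2 Pa]; first exact: HR Pa Rab.
exact: IH2 (IH1 Pa).
Qed.

Lemma exists_min_split (A : Type) (f : A -> nat) (o : seq A) : 0 < size o ->
  exists o1 x o2, o = o1 ++ x :: o2 /\ all (fun y => f x <= f y) (o1 ++ o2).
Proof.
elim: o => // x [_ _|y o IH _]; first by exists [::], x, [::].
have [o1 [z [o2 [Eo Hz]]]] := IH isT.
case: (leqP (f x) (f z)) => [Hxz|Hzx].
- exists [::], x, (y :: o); split=> //; rewrite cat0s Eo all_cat /= Hxz.
  move: Hz; rewrite all_cat => /andP[Hz1 Hz2].
  by rewrite !(sub_all _ Hz1, sub_all _ Hz2) // => u; apply: leq_trans.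
- by exists (x :: o1), z, o2; rewrite Eo /= ltnW.
Qed.

Lemma mem_map_In (A : Type) (B : eqType) (f : A -> B) (C : seq A) b :
  b \in map f C -> exists2 a, List.In a C & f a = b.
Proof.
elim: C => //= a C IH; rewrite inE => /orP[/eqP->|/IH[a' Ha' <-]].
  by exists a; first left.
by exists a'; first right.
Qed.

Lemma all_In (A : Type) (P : pred A) (C : seq A) a :
  all P C -> List.In a C -> P a.
Proof. by elim: C => //= a' C IH /andP[Pa' PC] [<- // | /(IH PC)]. Qed.

Lemma In_remove_mid (A : Type) (o1 o2 : seq A) x y :
  List.In y (o1 ++ x :: o2) -> y = x \/ List.In y (o1 ++ o2).
Proof. by rewrite !List.in_app_iff /=; intuition. Qed.

Lemma In_mid (A : Type) (o1 o2 : seq A) x : List.In x (o1 ++ x :: o2).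
Proof. by rewrite List.in_app_iff /=; auto. Qed.

Section CBS_DL.
Variables (V : finType) (E : rel V) (M T : nat) (s g : 'I_M -> V).

Definition in_range (c : constr V M) : bool :=
  match c with VCon _ _ t => t <= T | ECon _ _ _ t => t < T end.

Definition constr_code (c : constr V M) : bool * 'I_M * V * V * 'I_T.+1 :=
  match c with
  | VCon i v t => (false, i, v, v, inord t)
  | ECon i u v t => (true, i, u, v, inord t)
  end.

Lemma constr_code_inj : {in in_range &, injective constr_code}.
Proof.
case=> [i v t|i u v t] [i' v' t'|i' u' v' t'] //; rewrite !unfold_in /= => Ht Ht' Heq;
  case: (Heq) => *; subst; move/(congr1 (fun x => val x.2)): Heq;
  by rewrite /= !inordK ?ltnS ?(ltnW Ht) ?(ltnW Ht') // => ->.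
Qed.

Definition violated_by (p : plan V M) (c : constr V M) : Prop :=
  exists2 l, p (agent_of c) = Some l & violates T (agent_of c) l c.

Lemma violates_agent (k : 'I_M) (l : nat -> V) (c : constr V M) :
  violates T k l c -> agent_of c = k.
Proof. by case: c => [j v t|j u v t] [->]. Qed.

Definition valid_node (N : node V M) : Prop :=
  [/\ forall k, lowlevel_result E T s g k (nC N) (nplan N k),
      all in_range (nC N) & uniq (map constr_code (nC N))].

Definition consistent (q : plan V M) (N : node V M) : Prop :=
  forall k l, q k = Some l -> obeys T k (nC N) l.

Lemma lowlevel_result_exists k C : exists r, lowlevel_result E T s g k C r.
Proof.
case: (classic (exists l, is_path E T s g k l /\ obeys T k C l)) => [[l Hl]|Hn].
  by exists (Some l).
by exists None.
Qed.

Lemma child_exists N c : exists N', is_child E T s g N c N'.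
Proof.
have [r Hr] := lowlevel_result_exists (agent_of c) (c :: nC N).
by eexists; exists r.
Qed.

Lemma lowlevel_result_cons k C c r : agent_of c <> k ->
  lowlevel_result E T s g k C r -> lowlevel_result E T s g k (c :: C) r.
Proof.
move=> Hck; case: r => [l [Hl Hob]|Hnone] /=.
  by split=> // c' [<- /violates_agent|/Hob].
by move=> [l [Hl Hob]]; apply: Hnone; exists l; split=> // c' Hc'; apply: Hob; right.
Qed.

(* The plan of N obeys N's constraints, so a constraint it violates is new. *)
Lemma violated_code_fresh N c : valid_node N -> in_range c ->
  violated_by (nplan N) c -> constr_code c \notin map constr_code (nC N).
Proof.
move=> [Hll Hrange _] Hc [l Hl Hviol]; apply/negP => /mem_map_In[c' Hc' Hcode].
have Ec : c' = c by apply: constr_code_inj => //; exact: all_In Hrange Hc'.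
subst c'; move: (Hll (agent_of c)); rewrite Hl => -[_ Hob].
exact: Hob Hc' Hviol.
Qed.

Lemma child_valid N c N' : valid_node N -> in_range c ->
  violated_by (nplan N) c -> is_child E T s g N c N' -> valid_node N'.
Proof.
move=> HN Hc Hviol [r [Hr ->]]; have Hfresh := violated_code_fresh HN Hc Hviol.
case: HN => Hll Hrange Huniq; split=> /=; last 2 first.
- by rewrite Hc.
- by rewrite Hfresh.
move=> k; rewrite /update; case: eqP => [->//|Hk].
by apply: lowlevel_result_cons => // Eck; apply: Hk.
Qed.

Lemma child_consistent q N c N' : consistent q N -> ~ violated_by q c ->
  is_child E T s g N c N' -> consistent q N'.
Proof.
move=> Hq Hc [r [_ ->]] k l Hk c' /= [<- Hviol|Hc'].
  by move: (violates_agent Hviol) => Ek; apply: Hc; exists l; rewrite Ek.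
exact: Hq Hk c' Hc'.
Qed.

Lemma consistent_child_or q N c1 c2 N1 N2 :
  ~ (violated_by q c1 /\ violated_by q c2) -> consistent q N ->
  is_child E T s g N c1 N1 -> is_child E T s g N c2 N2 ->
  consistent q N1 \/ consistent q N2.
Proof.
move=> Hboth Hq H1 H2; case: (classic (violated_by q c1)) => Hv1.
  by right; apply: child_consistent Hq _ H2 => Hv2; apply: Hboth.
by left; apply: child_consistent Hq Hv1 H1.
Qed.

(* Agents without a path in a valid node have no path obeying its
   constraints, so they cannot succeed in a consistent plan either. *)
Lemma consistent_ncost_le q N : valid_node N -> is_plan E T s g q ->
  consistent q N -> ncost N <= cost q.
Proof.
move=> [Hll _ _] Hq Hcons; apply/subset_leq_card/subsetP => k; rewrite !inE.
move: (Hll k); case: (nplan N k) => //= Hnone _.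
case Eqk: (q k) => [l|] //; exfalso; apply: Hnone.
by exists l; split; [exact: Hq | exact: Hcons].
Qed.

Lemma valid_node_solution N : valid_node N -> collision_free T (nplan N) ->
  solution E T s g (nplan N).
Proof.
by move=> [Hll _ _] Hcf; split=> // k l Hk; move: (Hll k); rewrite Hk => -[].
Qed.

Lemma empty_plan_solution : solution E T s g (fun _ => None).
Proof. by split=> //; split=> > [_ [_ [? [? []]]]]. Qed.

Definition branching (p : plan V M) (c1 c2 : constr V M) : Prop :=
  [/\ in_range c1, in_range c2, violated_by p c1, violated_by p c2 &
      forall q, collision_free T q -> ~ (violated_by q c1 /\ violated_by q c2)].

Lemma vertex_collision_branching p i j v t :
  vertex_collision T p i j v t -> branching p (VCon i v t) (VCon j v t).
Proof.
move=> [Hij [Ht [li [lj [Hi [Hj [Hli Hlj]]]]]]].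
split=> //; [by exists li | by exists lj |].
move=> q [Hvc _] [[li' /= Hi' [_ [_ Hli']]] [lj' /= Hj' [_ [_ Hlj']]]].
by apply: (Hvc i j v t); do 2!split=> //; exists li', lj'.
Qed.

Lemma edge_collision_branching p i j u v t :
  edge_collision T p i j u v t -> branching p (ECon i u v t) (ECon j v u t).
Proof.
move=> [Hij [Ht [li [lj [Hi [Hj [Hli [Hlj' [Hlj Hli']]]]]]]]].
split=> //; [by exists li | by exists lj |].
move=> q [_ Hec] [[li2 /= Hi2 [_ [_ [Hu1 Hv1]]]] [lj2 /= Hj2 [_ [_ [Hv2 Hu2]]]]].
by apply: (Hec i j u v t); do 2!split=> //; exists li2, lj2.
Qed.

(* One iteration of the high level, with the collision abstracted into the
   two constraints it branches on. *)
Inductive branch_step : state V M -> state V M -> Prop :=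
| BranchReturn o1 N o2 :
    all (fun N' => ncost N <= ncost N') (o1 ++ o2) ->
    collision_free T (nplan N) ->
    branch_step (Running (o1 ++ N :: o2)) (Done (nplan N))
| BranchSplit o1 N o2 c1 c2 N1 N2 :
    all (fun N' => ncost N <= ncost N') (o1 ++ o2) ->
    branching (nplan N) c1 c2 ->
    is_child E T s g N c1 N1 -> is_child E T s g N c2 N2 ->
    branch_step (Running (o1 ++ N :: o2)) (Running (o1 ++ o2 ++ [:: N1; N2])).

Lemma step_branch_step st st' : step E T s g st st' -> branch_step st st'.
Proof.
case=> > Hmin; first exact: BranchReturn.
- by move/vertex_collision_branching; apply: BranchSplit.
- by move/edge_collision_branching; apply: BranchSplit.
Qed.

Lemma running_step_exists o : 0 < size o ->
  exists st', step E T s g (Running o) st'.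
Proof.
move=> Ho; apply: NNPP => Hstuck.
have [o1 [N [o2 [Eo Hmin]]]] := exists_min_split ncost Ho; subst o.
suff Hcf : collision_free T (nplan N) by apply: Hstuck; eexists; apply: step_return.
split=> [i j v t Hc|i j u v t Hc]; apply: Hstuck.
- have [N1 H1] := child_exists N (VCon i v t).
  have [N2 H2] := child_exists N (VCon j v t).
  by eexists; apply: step_vertex H1 H2.
- have [N1 H1] := child_exists N (ECon i u v t).
  have [N2 H2] := child_exists N (ECon j v u t).
  by eexists; apply: step_edge H1 H2.
Qed.

Definition cbs_inv (st : state V M) : Prop :=
  match st with
  | Running o => (forall N, List.In N o -> valid_node N) /\
      forall q, solution E T s g q -> exists2 N, List.In N o & consistent q N
  | Done p => optimal_solution E T s g p
  end.

Lemma cbs_inv_root root :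
  (forall k, lowlevel_result E T s g k [::] (root k)) ->
  cbs_inv (Running [:: Node [::] root]).
Proof.
move=> Hroot; split=> [N [<-|[]] //|q _].
by exists (Node [::] root); [left | move=> k l _ c []].
Qed.

Lemma cbs_inv_return o1 N o2 :
  all (fun N' => ncost N <= ncost N') (o1 ++ o2) ->
  collision_free T (nplan N) ->
  cbs_inv (Running (o1 ++ N :: o2)) -> optimal_solution E T s g (nplan N).
Proof.
move=> Hmin Hcf [Hvalid Hcover].
split; first exact: valid_node_solution (Hvalid _ (In_mid _ _ _)) Hcf.
move=> q Hq; have [N' HN' Hcons] := Hcover q Hq.
have Hle := consistent_ncost_le (Hvalid _ HN') Hq.1 Hcons.
case: (In_remove_mid HN') => [<- //|HN'o].
exact: leq_trans (all_In Hmin HN'o) Hle.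
Qed.

Lemma cbs_inv_split o1 N o2 c1 c2 N1 N2 :
  branching (nplan N) c1 c2 ->
  is_child E T s g N c1 N1 -> is_child E T s g N c2 N2 ->
  cbs_inv (Running (o1 ++ N :: o2)) -> cbs_inv (Running (o1 ++ o2 ++ [:: N1; N2])).
Proof.
move=> [Hr1 Hr2 Hv1 Hv2 Hboth] H1 H2 [Hvalid Hcover].
have HN := Hvalid _ (In_mid o1 o2 N).
have Hold N' : List.In N' (o1 ++ o2) -> List.In N' (o1 ++ o2 ++ [:: N1; N2]).
  by rewrite !List.in_app_iff; tauto.
split.
- move=> N'; rewrite !List.in_app_iff /= => -[HN'|[HN'|[<-|[<-|[]]]]].
  + by apply: Hvalid; rewrite List.in_app_iff; left.
  + by apply: Hvalid; rewrite List.in_app_iff /=; right; right.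
  + exact: child_valid HN Hr1 Hv1 H1.
  + exact: child_valid HN Hr2 Hv2 H2.
- move=> q Hq; have [N' HN' Hcons] := Hcover q Hq.
  case: (In_remove_mid HN') => [EN|HN'o]; last by exists N'; first exact: Hold.
  subst N'; have [Hc1|Hc2] := consistent_child_or (Hboth q Hq.2) Hcons H1 H2.
  + by exists N1 => //; rewrite !List.in_app_iff /=; tauto.
  + by exists N2 => //; rewrite !List.in_app_iff /=; tauto.
Qed.

Lemma cbs_inv_step st st' : cbs_inv st -> branch_step st st' -> cbs_inv st'.
Proof.
move=> Hinv Hst; case: Hst Hinv => [o1 N o2 Hmin Hcf|o1 N o2 c1 c2 N1 N2 _ Hbr H1 H2] Hinv.
  exact: cbs_inv_return Hmin Hcf Hinv.
exact: cbs_inv_split Hbr H1 H2 Hinv.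
Qed.

Definition depth_bound : nat := #|{: bool * 'I_M * V * V * 'I_T.+1}|.

Definition node_weight (N : node V M) : nat := 3 ^ (depth_bound - size (nC N)).

Definition state_weight (st : state V M) : nat :=
  if st is Running o then sumn (map node_weight o) else 0.

Lemma valid_node_size N : valid_node N -> size (nC N) <= depth_bound.
Proof.
by move=> [_ _ Huniq]; rewrite -(size_map constr_code) -(card_uniqP Huniq) max_card.
Qed.

Lemma child_size N c N' : is_child E T s g N c N' -> size (nC N') = (size (nC N)).+1.
Proof. by move=> [r [_ ->]]. Qed.

Lemma branch_step_weight st st' : cbs_inv st' -> branch_step st st' ->
  state_weight st' < state_weight st.
Proof.
move=> Hinv Hst; case: Hst Hinv => [o1 N o2 _ _|o1 N o2 c1 c2 N1 N2 _ _ H1 H2] Hinv /=;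
  rewrite !map_cat !sumn_cat /= /node_weight.
  by have := expn_gt0 3 (depth_bound - size (nC N)); lia.
have HN1 : valid_node N1 by apply: Hinv.1; rewrite !List.in_app_iff /=; tauto.
have := valid_node_size HN1; rewrite (child_size H1) (child_size H2) => Hsize.
have -> : depth_bound - size (nC N) = (depth_bound - (size (nC N)).+1).+1 by lia.
by rewrite expnS; have := expn_gt0 3 (depth_bound - (size (nC N)).+1); lia.
Qed.

Lemma cbs_inv_stuck st : cbs_inv st -> (forall st', ~ step E T s g st st') ->
  exists p, st = Done p /\ optimal_solution E T s g p.
Proof.
case: st => [o [_ Hcover] Hstuck|p Hp _]; last by exists p.
have [N HN _] := Hcover _ empty_plan_solution.
have [|st' Hst'] := running_step_exists (o := o); first by case: o {Hcover Hstuck} HN.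
by case: (Hstuck st').
Qed.

End CBS_DL.

Theorem theorem2 (V : finType) (E : rel V) (M T : nat) (s g : 'I_M -> V)
  (Esym : symmetric E) (Eirr : irreflexive E)
  (Hdist : forall i : 'I_M, dist_le E (s i) (g i) T)
  (root : plan V M)
  (Hroot : forall i : 'I_M, lowlevel_result E T s g i [::] (root i)) :
  Acc (fun y x => step E T s g x y) (Running [:: Node [::] root]) /\
  (forall st, clos_refl_trans _ (step E T s g) (Running [:: Node [::] root]) st ->
     (forall st', ~ step E T s g st st') ->
     exists p, st = Done p /\ optimal_solution E T s g p).
Proof.
have Hinit := cbs_inv_root Hroot.
have Hstep st st' : cbs_inv E T s g st -> step E T s g st st' -> cbs_inv E T s g st'.
  by move=> Hst /step_branch_step; apply: cbs_inv_step.
split.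
- apply: (Acc_of_measure (P := cbs_inv E T s g) (f := state_weight T)) Hinit.
  move=> st st' Hst Hstst'; have Hst' := Hstep _ _ Hst Hstst'.
  by split=> //; apply: branch_step_weight Hst' (step_branch_step Hstst').
- move=> st Hreach Hstuck; apply: cbs_inv_stuck Hstuck.
  exact: clos_refl_trans_inv Hstep Hreach Hinit.
Qed.
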